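(* A circular net $f:\mathbb Z^m\to\mathbb R^N$ (in general position) is discrete isothermic if and only if there exists a real-valued edge labelling $(\alpha_1,\dots,\alpha_m)$ of $\mathbb Z^m$ such that for every $u$ and $i\ne j$, $$q(f,f_i,f_{ij},f_j)=\frac{\alpha_i}{\alpha_j}.$$
   Context: Notation: for $f:\mathbb Z^m\to\mathbb R^N$, $f=f(u)$, $f_i=f(u+e_i)$, $f_{ij}=f(u+e_i+e_j)$ with $e_i$ the unit vectors. A Q-net is a map such that each elementary quadrilateral $(f,f_i,f_{ij},f_j)$ ($i\ne j$) is planar, assumed non-degenerate (distinct vertices, no three collinear, diagonals meeting in a point distinct from the vertices). Two planar quadrilaterals $(A,B,C,D)$, $(A^*,B^*,C^*,D^* )$ are dual if $A^*B^*\parallel AB$, $B^*C^*\parallel BC$, $C^*D^*\parallel CD$, $D^*A^*\parallel DA$, $A^*C^*\parallel BD$, $B^*D^*\parallel AC$. A Q-net $f$ is a discrete Koenigs net if there is a Q-net $f^*$ with every $(f^*,f^*_i,f^*_{ij},f^*_j)$ dual to $(f,f_i,f_{ij},f_j)$. A circular net is a Q-net all of whose elementary quadrilaterals have their four vertices on a circle. A discrete isothermic net is a circular net which is a discrete Koenigs net. For four concircular points $a,b,c,d\in\mathbb R^N$, their cross-ratio is $q(a,b,c,d)=(a-b)(b-c)^{-1}(c-d)(d-a)^{-1}$, computed after identifying a $2$-plane containing them with $\mathbb C$; it is real. An edge labelling is a system of real functions $\alpha_i$ ($i=1,\dots,m$) on the edges of $\mathbb Z^m$ parallel to the $i$-th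 axis, taking equal values on opposite edges of every elementary square; equivalently, $\alpha_i(u)$ (the value on the edge $(u,u+e_i)$) depends only on $u_i$. *)

From Stdlib Require Import Reals ZArith.
From mathcomp Require Import all_boot.
Set Implicit Arguments. Unset Strict Implicit. Unset Printing Implicit Defensive.
Open Scope R_scope.

Definition Vec (N : nat) := 'I_N -> R.

Section Vectors.
Variable N : nat.
Implicit Types x y : Vec N.
Definition vzero : Vec N := fun _ => 0.
Definition vadd x y : Vec N := fun k => x k + y k.
Definition vsub x y : Vec N := fun k => x k - y k.
Definition vscale (r : R) x : Vec N := fun k => r * x k.
Definition dot x y : R := \big[Rplus/0]_(k < N) (x k * y k).

Definition lin_dep2 (u v : Vec N) : Prop :=
  exists l1 l2 : R, (l1 <> 0 \/ l2 <> 0) /\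
    vadd (vscale l1 u) (vscale l2 v) = vzero.
Definition lin_dep3 (u v w : Vec N) : Prop :=
  exists l1 l2 l3 : R, (l1 <> 0 \/ l2 <> 0 \/ l3 <> 0) /\
    vadd (vadd (vscale l1 u) (vscale l2 v)) (vscale l3 w) = vzero.

Definition collinear (A B C : Vec N) : Prop := lin_dep2 (vsub B A) (vsub C A).
Definition planar4 (A B C D : Vec N) : Prop :=
  lin_dep3 (vsub B A) (vsub C A) (vsub D A).
Definition on_line (P A B : Vec N) : Prop :=
  exists s : R, P = vadd A (vscale s (vsub B A)).
Definition parallel (u v : Vec N) : Prop := lin_dep2 u v.

Definition nondeg_quad (A B C D : Vec N) : Prop :=
  [/\ A <> B, A <> C, A <> D & B <> C] /\ (B <> D /\ C <> D) /\
  [/\ ~ collinear A B C, ~ collinear A B D, ~ collinear A C D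
    & ~ collinear B C D] /\
  (exists P : Vec N, on_line P A C /\ on_line P B D /\
     [/\ P <> A, P <> B, P <> C & P <> D]).

Definition good_quad (A B C D : Vec N) : Prop :=
  planar4 A B C D /\ nondeg_quad A B C D.

Definition dual_quads (A B C D A' B' C' D' : Vec N) : Prop :=
  [/\ parallel (vsub B' A') (vsub B A), parallel (vsub C' B') (vsub C B),
      parallel (vsub D' C') (vsub D C) & parallel (vsub A' D') (vsub A D)] /\
  (parallel (vsub C' A') (vsub D B) /\ parallel (vsub D' B') (vsub C A)).

(* the four points lie on a circle: a circle is the set of points of an
   affine 2-plane c + span(e1,e2) (e1, e2 orthonormal) at distance rho > 0
   from the center c *)
Definition on_circle (c e1 e2 : Vec N) (rho : R) (X : Vec N) : Prop :=
  (exists x y : R, X = vadd c (vadd (vscale x e1) (vscale y e2))) /\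
  dot (vsub X c) (vsub X c) = rho * rho.
Definition concircular (A B C D : Vec N) : Prop :=
  exists (c e1 e2 : Vec N) (rho : R),
    [/\ dot e1 e1 = 1, dot e2 e2 = 1, dot e1 e2 = 0 & 0 < rho] /\
    [/\ on_circle c e1 e2 rho A, on_circle c e1 e2 rho B,
        on_circle c e1 e2 rho C & on_circle c e1 e2 rho D].

Definition C := (R * R)%type.
Definition csub (z w : C) : C := (fst z - fst w, snd z - snd w).
Definition cmul (z w : C) : C :=
  (fst z * fst w - snd z * snd w, fst z * snd w + snd z * fst w).
Definition cinv (z : C) : C :=
  let n := fst z * fst z + snd z * snd z in (fst z / n, - snd z / n).

(* Cross-ratio of four (concircular) points a b c d of R^N:
   identify the 2-plane through a spanned by b - a and d - a with C via the
   orthonormal frame (origin a, e1, e2) obtained by Gram-Schmidt, then compute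
   q = (a-b)(b-c)^{-1}(c-d)(d-a)^{-1} in C. *)
Definition cross_ratio (a b c d : Vec N) : C :=
  let v := vsub b a in
  let e1 := vscale (/ sqrt (dot v v)) v in
  let w0 := vsub (vsub d a) (vscale (dot (vsub d a) e1) e1) in
  let e2 := vscale (/ sqrt (dot w0 w0)) w0 in
  let z (X : Vec N) : C := (dot (vsub X a) e1, dot (vsub X a) e2) in
  cmul (cmul (cmul (csub (z a) (z b)) (cinv (csub (z b) (z c))))
             (csub (z c) (z d)))
       (cinv (csub (z d) (z a))).
End Vectors.

Definition lshift_e (m : nat) (u : 'I_m -> Z) (i : 'I_m) : 'I_m -> Z :=
  fun k => if k == i then (u k + 1)%Z else u k.

Section Nets.
Variables m N : nat.
Implicit Types f : ('I_m -> Z) -> Vec N.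

Definition Qnet f : Prop :=
  forall (u : 'I_m -> Z) (i j : 'I_m), i <> j ->
    good_quad (f u) (f (lshift_e u i)) (f (lshift_e (lshift_e u i) j)) (f (lshift_e u j)).

Definition koenigs f : Prop :=
  exists fs : ('I_m -> Z) -> Vec N, Qnet fs /\
    forall (u : 'I_m -> Z) (i j : 'I_m), i <> j ->
      dual_quads (f u) (f (lshift_e u i)) (f (lshift_e (lshift_e u i) j)) (f (lshift_e u j))
                 (fs u) (fs (lshift_e u i)) (fs (lshift_e (lshift_e u i) j)) (fs (lshift_e u j)).

Definition circular_net f : Prop :=
  Qnet f /\
  forall (u : 'I_m -> Z) (i j : 'I_m), i <> j ->
    concircular (f u) (f (lshift_e u i)) (f (lshift_e (lshift_e u i) j)) (f (lshift_e u j)).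

Definition isothermic f : Prop := circular_net f /\ koenigs f.
End Nets.

From Pilot Require Import Defs.
From Stdlib Require Import Reals ZArith.
From mathcomp Require Import all_boot.
From HB Require Import structures.
From Stdlib Require Import Lra Lia Field FunctionalExtensionality.
(* [C] below is the complex plane of Defs, not the binomial of Reals. *)
Import Defs.
Set Implicit Arguments. Unset Strict Implicit.
Open Scope R_scope.

(* Everything happens in one elementary quadrilateral
   (A,B,C,D) = (f, f_i, f_ij, f_j) at a time, read in the complex
   coordinate of its plane given by the Gram-Schmidt frame that also
   defines [cross_ratio]; with A at the origin the cross-ratio is
   q = (-a)(a-z)^-1(z-d)d^-1 for a = B-A, z = C-A, d = D-A.
   - Forward: if (A',B',C',D') is a dual quadrilateral, its edges are
     s_k times the original edges; closing the dual quadrilateral and the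
     parallelity of one diagonal, together with q being real (the four
     points are concyclic), force the "edge products" <A'B', AB> etc. on
     opposite edges to agree and q = <A'B',AB> / <A'D',AD>.  These edge
     products form a labelling, i.e. alpha_i depends only on u_i.
   - Backward: if q = alpha_i/alpha_j, the vectors
     alpha_k (f_k - f)/|f_k - f|^2 (complex: alpha_k / conj(edge)) close
     up around every quadrilateral and bound a non-degenerate dual one;
     a closed discrete 1-form on Z^m is exact, which yields the dual net. *)

Definition c0 : C := (0, 0).
Definition c1 : C := (1, 0).
Definition cadd (z w : C) : C := (fst z + fst w, snd z + snd w).
Definition copp (z : C) : C := (- fst z, - snd z).
Definition cdiv (z w : C) : C := cmul z (cinv w).
Definition cconj (z : C) : C := (fst z, - snd z).
Definition RC (r : R) : C := (r, 0).
Definition cnorm2 (z : C) : R := fst z * fst z + snd z * snd z.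
(* the determinant [p q] = Im (conj p * q); it vanishes iff p, q are
   real-proportional *)
Definition cross (p q : C) : R := fst p * snd q - snd p * fst q.

Lemma Ceq (z w : C) : fst z = fst w -> snd z = snd w -> z = w.
Proof. by case: z; case: w => /= ? ? ? ? -> ->. Qed.

Lemma cnorm2_neq0 (z : C) : z <> c0 -> cnorm2 z <> 0.
Proof.
case: z => x y /= Hz Hn; apply: Hz; rewrite /cnorm2 /= in Hn.
have -> : x = 0 by nra. have -> : y = 0 by nra. by [].
Qed.

Lemma C_ring : ring_theory c0 c1 cadd cmul csub copp (@eq C).
Proof.
split; intros; apply: Ceq; rewrite /cadd /cmul /csub /copp /c0 /c1 /=; ring.
Qed.

Lemma C_field : field_theory c0 c1 cadd cmul csub copp cdiv cinv (@eq C).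
Proof.
split; [exact: C_ring | by rewrite /c1 /c0; case; lra | by [] |].
move=> p /cnorm2_neq0; case: p => x y; rewrite /cnorm2 /= => hn.
by apply: Ceq; rewrite /cmul /cinv /c1 /=; field.
Qed.

Add Field C_field_inst : C_field.

Lemma csub0 x : csub x c0 = x.
Proof. by apply: Ceq; rewrite /=; ring. Qed.

Lemma csub_neq0 x y : x <> y -> csub x y <> c0.
Proof.
move=> H E; apply: H; case: x y E => x1 x2 [y1 y2] [] /= E1 E2.
by apply: Ceq; rewrite /=; lra.
Qed.

Lemma cmul_neq0 x y : x <> c0 -> y <> c0 -> cmul x y <> c0.
Proof.
move=> Hx Hy E; apply: Hy.
transitivity (cmul (cinv x) (cmul x y)); first by field.
by rewrite E; apply: Ceq; rewrite /=; ring.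
Qed.

Lemma cinv_neq0 x : x <> c0 -> cinv x <> c0.
Proof.
move=> Hx E; have : cmul (cinv x) x = c1 by field.
by rewrite E => /(f_equal fst) /=; lra.
Qed.

Lemma RC_neq0 x : x <> 0 -> RC x <> c0.
Proof. by move=> H E; apply: H; case: E. Qed.
Lemma RC_sub x y : RC (x - y) = csub (RC x) (RC y).
Proof. by apply: Ceq; rewrite /=; ring. Qed.
Lemma RC_mul x y : RC (x * y) = cmul (RC x) (RC y).
Proof. by apply: Ceq; rewrite /=; ring. Qed.
Lemma RC_div x y : y <> 0 -> RC (x / y) = cdiv (RC x) (RC y).
Proof. by move=> H; apply: Ceq; rewrite /cdiv /=; field. Qed.
Lemma snd_RCmul r z : snd (cmul (RC r) z) = r * snd z.
Proof. by rewrite /=; ring. Qed.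

Lemma conj_add x y : cconj (cadd x y) = cadd (cconj x) (cconj y).
Proof. by apply: Ceq; rewrite /=; ring. Qed.
Lemma conj_sub x y : cconj (csub x y) = csub (cconj x) (cconj y).
Proof. by apply: Ceq; rewrite /=; ring. Qed.
Lemma conj_mul x y : cconj (cmul x y) = cmul (cconj x) (cconj y).
Proof. by apply: Ceq; rewrite /=; ring. Qed.
Lemma conj_RC r : cconj (RC r) = RC r.
Proof. by apply: Ceq; rewrite /=; ring. Qed.
Lemma conjK x : cconj (cconj x) = x.
Proof. by apply: Ceq; rewrite /=; ring. Qed.
Lemma conj_neq0 x : x <> c0 -> cconj x <> c0.
Proof. by move=> H E; apply: H; rewrite -(conjK x) E; apply: Ceq; rewrite /=; ring. Qed.
Lemma conj_inv x : x <> c0 -> cconj (cinv x) = cinv (cconj x).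
Proof.
move=> /cnorm2_neq0; case: x => x1 x2; rewrite /cnorm2 /= => H.
by apply: Ceq; rewrite /=; field; contradict H; nra.
Qed.
Lemma conj_as_inv x : x <> c0 -> cconj x = cmul (RC (cnorm2 x)) (cinv x).
Proof.
move=> /cnorm2_neq0; case: x => x1 x2; rewrite /cnorm2 /= => H.
by apply: Ceq; rewrite /=; field.
Qed.
Lemma conj_RCmul s z : z <> c0 ->
  cconj (cmul (RC s) z) = cmul (RC (s * cnorm2 z)) (cinv z).
Proof.
move=> Hz; rewrite conj_mul conj_RC conj_as_inv // RC_mul.
by apply: Ceq; rewrite /=; ring.
Qed.

Lemma cross_conj x y : cross x y = snd (cmul (cconj x) y).
Proof. by rewrite /cross /=; ring. Qed.
Lemma cross_RCr b r z : cross b (cmul (RC r) z) = r * cross b z.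
Proof. by rewrite /cross /=; ring. Qed.
Lemma cross_scal p q x y : cross (cmul (RC p) x) (cmul (RC q) y) = p * q * cross x y.
Proof. by rewrite /cross /=; ring. Qed.
Lemma cross_self b : cross b b = 0.
Proof. by rewrite /cross; ring. Qed.
Lemma cross_anti x y : cross y x = - cross x y.
Proof. by rewrite /cross /=; ring. Qed.
Lemma cross_addr x y z : cross x (cadd y z) = cross x y + cross x z.
Proof. by rewrite /cross /=; ring. Qed.
Lemma cross_subr x y z : cross x (csub y z) = cross x y - cross x z.
Proof. by rewrite /cross /=; ring. Qed.
Lemma cross_addl x y z : cross (cadd y z) x = cross y x + cross z x.
Proof. by rewrite /cross /=; ring. Qed.
Lemma cross_subl x y z : cross (csub y z) x = cross y x - cross z x.
Proof. by rewrite /cross /=; ring. Qed.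
Lemma cross_neq0_l x y : cross x y <> 0 -> x <> c0.
Proof. by move=> H E; apply: H; rewrite E /cross /=; ring. Qed.
Lemma cross_neq0_r x y : cross x y <> 0 -> y <> c0.
Proof. by move=> H E; apply: H; rewrite E /cross /=; ring. Qed.
Lemma snd_div_cross a z : a <> c0 -> snd (cdiv z a) = cross a z / cnorm2 a.
Proof.
move=> /cnorm2_neq0; case: a => a1 a2; rewrite /cnorm2 /cross /= => H.
by rewrite /=; field.
Qed.

Lemma cross_parallel_neq0 x' x y' y :
  cross x' x = 0 -> cross y' y = 0 -> x' <> c0 -> y' <> c0 ->
  cross x y <> 0 -> cross x' y' <> 0.
Proof.
move=> Hx Hy /cnorm2_neq0 nx /cnorm2_neq0 ny Hxy Hc; apply: Hxy.
have proportional p v : cross p v = 0 -> cnorm2 p <> 0 ->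
    v = cmul (RC (fst (cmul (cconj p) v) / cnorm2 p)) p.
  rewrite /cross /cnorm2; case: p => p1 p2; case: v => v1 v2 /= H n.
  have h1 : p1 * (p1 * v2 - p2 * v1) = 0 by rewrite H; ring.
  have h2 : p2 * (p1 * v2 - p2 * v1) = 0 by rewrite H; ring.
  by apply: Ceq; rewrite /=; field_simplify_eq; try exact: n; lra.
rewrite (proportional _ _ Hx nx) (proportional _ _ Hy ny).
by rewrite cross_scal Hc; ring.
Qed.

Lemma RplusA : associative Rplus. Proof. by move=> *; ring. Qed.
HB.instance Definition _ := Monoid.isComLaw.Build R 0 Rplus RplusA Rplus_comm Rplus_0_l.

Section Euclid.
Variable N : nat.
Implicit Types x y z : Vec N.

Lemma vext x y : (forall k, x k = y k) -> x = y.
Proof. by move=> H; apply: functional_extensionality. Qed.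

Lemma dotC x y : dot x y = dot y x.
Proof. by rewrite /dot; apply: eq_bigr => k _; ring. Qed.
Lemma dot_addl x y z : dot (vadd x y) z = dot x z + dot y z.
Proof. by rewrite /dot /vadd -big_split /=; apply: eq_bigr => k _; ring. Qed.
Lemma dot_subl x y z : dot (vsub x y) z = dot x z - dot y z.
Proof. by rewrite /dot /vsub; elim/big_rec3: _ => [|k a b c _ ->]; ring. Qed.
Lemma dot_scalel r x z : dot (vscale r x) z = r * dot x z.
Proof. by rewrite /dot /vscale; elim/big_rec2: _ => [|k a b _ ->]; ring. Qed.
Lemma dot_addr x y z : dot z (vadd x y) = dot z x + dot z y.
Proof. by rewrite dotC dot_addl dotC (dotC y). Qed.
Lemma dot_subr x y z : dot z (vsub x y) = dot z x - dot z y.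
Proof. by rewrite dotC dot_subl dotC (dotC y). Qed.
Lemma dot_scaler r x z : dot z (vscale r x) = r * dot z x.
Proof. by rewrite dotC dot_scalel dotC. Qed.
Lemma dot0l z : dot (@vzero N) z = 0.
Proof. by rewrite /dot /vzero; elim/big_rec: _ => [|k a _ ->]; ring. Qed.
Lemma dot_sub_sq x y : dot (vsub x y) (vsub x y) = dot x x - 2 * dot x y + dot y y.
Proof. by rewrite !dot_subl !dot_subr (dotC y x); ring. Qed.

Lemma dot_ge0 x : 0 <= dot x x.
Proof. by rewrite /dot; elim/big_rec: _ => [|k a _ H]; nra. Qed.
Lemma dot_eq0 x : dot x x = 0 -> x = @vzero N.
Proof.
move=> H; apply: vext => k; move: H; rewrite /vzero /dot (bigD1 k) //=.
set S := (X in _ + X = _) => H.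
have : 0 <= S by rewrite /S; elim/big_rec: _ => [|i a _ Ha]; nra.
nra.
Qed.
Lemma dot_gt0 x : x <> @vzero N -> 0 < dot x x.
Proof.
move=> Hx; case: (Rle_lt_or_eq_dec _ _ (dot_ge0 x)) => // /esym /dot_eq0.
by move/Hx.
Qed.

Lemma vsubxx x : vsub x x = @vzero N.
Proof. by apply: vext => k; rewrite /vsub /vzero; ring. Qed.
Lemma vsub_neq0 x y : x <> y -> vsub x y <> @vzero N.
Proof.
move=> H E; apply: H; apply: vext => k; move: (f_equal (fun W => W k) E).
by rewrite /vsub /vzero; lra.
Qed.
Lemma vsub_via x y a : vsub x y = vsub (vsub x a) (vsub y a).
Proof. by apply: vext => k; rewrite /vsub; ring. Qed.
End Euclid.

Section PlaneCoordinates.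
Variable N : nat.
Implicit Types Y Z : Vec N.

Definition orthonormal (e1 e2 : Vec N) :=
  [/\ dot e1 e1 = 1, dot e2 e2 = 1 & dot e1 e2 = 0].
Definition in_plane (e1 e2 Y : Vec N) :=
  exists a b, Y = vadd (vscale a e1) (vscale b e2).
Definition coord (e1 e2 Y : Vec N) : C := (dot Y e1, dot Y e2).

Variables e1 e2 : Vec N.
Hypothesis Ho : orthonormal e1 e2.

Lemma coord_comb a b : coord e1 e2 (vadd (vscale a e1) (vscale b e2)) = (a, b).
Proof.
case: Ho => h11 h22 h12.
rewrite /coord !dot_addl !dot_scalel h11 h22 h12 (dotC e2 e1) h12.
by apply: Ceq => /=; ring.
Qed.

Lemma in_plane_coord Y : in_plane e1 e2 Y ->
  Y = vadd (vscale (fst (coord e1 e2 Y)) e1) (vscale (snd (coord e1 e2 Y)) e2).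
Proof. by case=> a [b ->]; rewrite coord_comb. Qed.

Lemma in_plane_add Y Z : in_plane e1 e2 Y -> in_plane e1 e2 Z -> in_plane e1 e2 (vadd Y Z).
Proof.
case=> a [b ->] [c [d ->]]; exists (a + c), (b + d).
by apply: vext => k; rewrite /vadd /vscale; ring.
Qed.
Lemma in_plane_sub Y Z : in_plane e1 e2 Y -> in_plane e1 e2 Z -> in_plane e1 e2 (vsub Y Z).
Proof.
case=> a [b ->] [c [d ->]]; exists (a - c), (b - d).
by apply: vext => k; rewrite /vsub /vadd /vscale; ring.
Qed.
Lemma in_plane_scale r Y : in_plane e1 e2 Y -> in_plane e1 e2 (vscale r Y).
Proof.
case=> a [b ->]; exists (r * a), (r * b).
by apply: vext => k; rewrite /vadd /vscale; ring.
Qed.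
Lemma in_plane_diff X Y A : in_plane e1 e2 (vsub X A) -> in_plane e1 e2 (vsub Y A) ->
  in_plane e1 e2 (vsub X Y).
Proof. by move=> hX hY; rewrite (vsub_via X Y A); apply: in_plane_sub. Qed.

Lemma coord_add Y Z : coord e1 e2 (vadd Y Z) = cadd (coord e1 e2 Y) (coord e1 e2 Z).
Proof. by rewrite /coord /cadd !dot_addl. Qed.
Lemma coord_sub Y Z : coord e1 e2 (vsub Y Z) = csub (coord e1 e2 Y) (coord e1 e2 Z).
Proof. by rewrite /coord /csub !dot_subl. Qed.
Lemma coord_scale r Y : coord e1 e2 (vscale r Y) = cmul (RC r) (coord e1 e2 Y).
Proof. by rewrite /coord /cmul /RC !dot_scalel; apply: Ceq => /=; ring. Qed.
Lemma coord_zero : coord e1 e2 (@vzero N) = c0.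
Proof. by rewrite /coord !dot0l. Qed.
Lemma coord_diff X Y A : coord e1 e2 (vsub X Y) = csub (coord e1 e2 (vsub X A)) (coord e1 e2 (vsub Y A)).
Proof. by rewrite (vsub_via X Y A) coord_sub. Qed.

Lemma coord_inj Y Z : in_plane e1 e2 Y -> in_plane e1 e2 Z -> coord e1 e2 Y = coord e1 e2 Z -> Y = Z.
Proof. by move=> HY HZ E; rewrite (in_plane_coord HY) (in_plane_coord HZ) E. Qed.

Lemma coord_eq0 Y : in_plane e1 e2 Y -> coord e1 e2 Y = c0 -> Y = @vzero N.
Proof.
move=> HY E; rewrite (in_plane_coord HY) E.
by apply: vext => k; rewrite /vadd /vscale /vzero /c0 /=; ring.
Qed.

Lemma dot_coord Y Z : in_plane e1 e2 Y -> in_plane e1 e2 Z ->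
  dot Y Z = fst (coord e1 e2 Y) * fst (coord e1 e2 Z) + snd (coord e1 e2 Y) * snd (coord e1 e2 Z).
Proof.
move=> /in_plane_coord EY /in_plane_coord EZ; rewrite {1}EY {1}EZ.
case: Ho => h11 h22 h12.
by rewrite !dot_addl !dot_addr !dot_scalel !dot_scaler h11 h22 (dotC e2 e1) h12; ring.
Qed.

Lemma dot_self_coord Y : in_plane e1 e2 Y -> dot Y Y = cnorm2 (coord e1 e2 Y).
Proof. exact: (fun h => dot_coord h h). Qed.

Lemma lin_dep2_cross Y Z : in_plane e1 e2 Y -> in_plane e1 e2 Z ->
  lin_dep2 Y Z <-> cross (coord e1 e2 Y) (coord e1 e2 Z) = 0.
Proof.
move=> HY HZ; split.
- case=> l1 [l2 [Hl E]].
  have E1 := f_equal (fun V => dot V e1) E.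
  have E2 := f_equal (fun V => dot V e2) E.
  rewrite /= !dot_addl !dot_scalel !dot0l in E1 E2.
  rewrite /cross /coord /=.
  have h1 : l1 * (dot Y e1 * dot Z e2 - dot Y e2 * dot Z e1) = 0.
    transitivity ((l1 * dot Y e1 + l2 * dot Z e1) * dot Z e2
                  - (l1 * dot Y e2 + l2 * dot Z e2) * dot Z e1); first ring.
    by rewrite E1 E2; ring.
  have h2 : l2 * (dot Y e1 * dot Z e2 - dot Y e2 * dot Z e1) = 0.
    transitivity ((l1 * dot Y e2 + l2 * dot Z e2) * dot Y e1
                  - (l1 * dot Y e1 + l2 * dot Z e1) * dot Y e2); first ring.
    by rewrite E1 E2; ring.
  by case: Hl => Hl; [case/Rmult_integral: h1 | case/Rmult_integral: h2].
- rewrite /cross => Hc.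
  case: (Req_dec (dot Z Z) 0) => HZZ.
  + exists 0, 1; split; first by right; lra.
    by rewrite (dot_eq0 HZZ); apply: vext => k; rewrite /vadd /vscale /vzero; ring.
  + exists (dot Z Z), (- dot Y Z); split; first by left.
    apply: coord_eq0.
    * by apply: in_plane_add; apply: in_plane_scale.
    * rewrite coord_add !coord_scale (dot_coord HZ HZ) (dot_coord HY HZ).
      move: Hc; case: (coord e1 e2 Y) => y1 y2; case: (coord e1 e2 Z) => z1 z2 /= Hc.
      have h1 : z2 * (y1 * z2 - y2 * z1) = 0 by rewrite Hc; ring.
      have h2 : z1 * (y1 * z2 - y2 * z1) = 0 by rewrite Hc; ring.
      by apply: Ceq; rewrite /cadd /cmul /RC /c0 /=; lra.
Qed.

Lemma not_collinear_cross A B X : in_plane e1 e2 (vsub B A) -> in_plane e1 e2 (vsub X A) ->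
  (~ collinear A B X <-> cross (coord e1 e2 (vsub B A)) (coord e1 e2 (vsub X A)) <> 0).
Proof. by move=> h1 h2; rewrite /collinear (lin_dep2_cross h1 h2); tauto. Qed.
End PlaneCoordinates.

(* The frame used by [cross_ratio]: Gram-Schmidt applied to B-A, D-A. *)
Section GramSchmidt.
Variable N : nat.
Implicit Types A B D X : Vec N.

Definition frame1 A B : Vec N :=
  let v := vsub B A in vscale (/ sqrt (dot v v)) v.
Definition frame2 A B D : Vec N :=
  let e1 := frame1 A B in
  let w0 := vsub (vsub D A) (vscale (dot (vsub D A) e1) e1) in
  vscale (/ sqrt (dot w0 w0)) w0.

Lemma not_collinear_neq A B D : ~ collinear A B D -> [/\ A <> B, A <> D & B <> D].
Proof.
move=> H; split => E; apply: H; rewrite /collinear ?E.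
- exists 1, 0; split; first by left; lra.
  by rewrite vsubxx; apply: vext => k; rewrite /vadd /vscale /vzero; ring.
- exists 0, 1; split; first by right; lra.
  by rewrite vsubxx; apply: vext => k; rewrite /vadd /vscale /vzero; ring.
- exists 1, (-1); split; first by left; lra.
  by apply: vext => k; rewrite /vadd /vscale /vzero; ring.
Qed.

Lemma gram_schmidt_frame A B D : ~ collinear A B D ->
  let e1 := frame1 A B in let e2 := frame2 A B D in
  [/\ orthonormal e1 e2, in_plane e1 e2 (vsub B A) & in_plane e1 e2 (vsub D A)].
Proof.
move=> Hnc e1 e2; set v := vsub B A.
have [hAB _ _] := not_collinear_neq Hnc.
have vv : 0 < dot v v by apply/dot_gt0/vsub_neq0/nesym.
have sv : 0 < sqrt (dot v v) by apply: sqrt_lt_R0.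
have sv2 : sqrt (dot v v) * sqrt (dot v v) = dot v v by apply: sqrt_sqrt; lra.
have h11 : dot e1 e1 = 1.
  by rewrite /e1 /frame1 -/v dot_scalel dot_scaler; field_simplify_eq; lra.
set t := dot (vsub D A) e1.
set w0 := vsub (vsub D A) (vscale t e1).
have w0e1 : dot w0 e1 = 0 by rewrite /w0 dot_subl dot_scalel h11 /t; ring.
have ww : 0 < dot w0 w0.
  apply: dot_gt0 => Hw; apply: Hnc; exists (t / sqrt (dot v v)), (-1).
  split; first by right; lra.
  have -> : vsub D A = vscale t e1.
    apply: vext => k; move: (f_equal (fun V => V k) Hw).
    by rewrite /w0 /vsub /vzero /= => Hk; lra.
  apply: vext => k; rewrite /vadd /vscale /e1 /frame1 -/v /vzero.
  by unfold vscale; field; lra.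
have sw : 0 < sqrt (dot w0 w0) by apply: sqrt_lt_R0.
have sw2 : sqrt (dot w0 w0) * sqrt (dot w0 w0) = dot w0 w0 by apply: sqrt_sqrt; lra.
have -> : e2 = vscale (/ sqrt (dot w0 w0)) w0 by [].
split.
- split => //; first by rewrite dot_scalel dot_scaler; field_simplify_eq; lra.
  by rewrite dot_scaler dotC w0e1; ring.
- exists (sqrt (dot v v)), 0; apply: vext => k.
  by rewrite /vadd /vscale /e1 /frame1 -/v; unfold vscale; field; lra.
- exists t, (sqrt (dot w0 w0)); apply: vext => k.
  rewrite /vadd /vscale -Rmult_assoc Rinv_r; last lra.
  by rewrite /w0 /vsub /vscale; ring.
Qed.

(* The cross-ratio read in complex coordinates centred at A:
   a = B - A, z = C - A, d = D - A. *)
Definition cr_planar (a z d : C) : C :=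
  cmul (cmul (cmul (csub c0 a) (cinv (csub a z))) (csub z d)) (cinv (csub d c0)).

Lemma cross_ratio_planar A B X D :
  let e1 := frame1 A B in let e2 := frame2 A B D in
  cross_ratio A B X D =
  cr_planar (coord e1 e2 (vsub B A)) (coord e1 e2 (vsub X A)) (coord e1 e2 (vsub D A)).
Proof. by rewrite /cross_ratio /= vsubxx !dot0l. Qed.
End GramSchmidt.

Lemma cr_planar_div a z d :
  cr_planar a z d = cdiv (cmul (cdiv (csub c0 a) (csub a z)) (csub z d)) (csub d c0).
Proof. by []. Qed.

Lemma cr_planar_neq0 a z d : a <> c0 -> z <> a -> d <> c0 -> z <> d ->
  cr_planar a z d <> c0.
Proof.
move=> ha hb hd hc; rewrite cr_planar_div csub0.
apply: cmul_neq0; last exact: cinv_neq0.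
apply: cmul_neq0; last exact: csub_neq0.
apply: cmul_neq0; last by apply/cinv_neq0/csub_neq0 => E; apply: hb.
move=> E; apply: ha; apply: Ceq; move: (f_equal fst E) (f_equal snd E); rewrite /=; lra.
Qed.

Definition dual_edge (v : C) (r : R) : C := cmul (RC r) (cinv (cconj v)).

Lemma conj_dual_edge v r : v <> c0 -> cconj (dual_edge v r) = cmul (RC r) (cinv v).
Proof.
by move=> H; rewrite /dual_edge conj_mul conj_RC conj_inv ?conjK //; exact: conj_neq0.
Qed.

Lemma dual_edge_scale v r : v <> c0 -> dual_edge v r = cmul (RC (r / cnorm2 v)) v.
Proof.
move=> /cnorm2_neq0; rewrite /dual_edge /cnorm2; case: v => v1 v2 /= H.
by apply: Ceq; rewrite /=; field; contradict H; nra.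
Qed.

Lemma planar_dual_of_real_cr a z d ai aj :
  a <> c0 -> z <> a -> d <> c0 -> z <> d -> aj <> 0 ->
  cr_planar a z d = RC (ai / aj) ->
  [/\ cadd (dual_edge a ai) (dual_edge (csub z a) aj) =
        cadd (dual_edge (csub z d) ai) (dual_edge d aj),
      cross (cadd (dual_edge a ai) (dual_edge (csub z a) aj)) (csub d a) = 0 &
      cross (csub (dual_edge d aj) (dual_edge a ai)) z = 0].
Proof.
move=> Ha Hb Hd Hc Haj HQ.
have nb := csub_neq0 Hb; have nc := csub_neq0 Hc.
have nb' := csub_neq0 (nesym Hb).
have Hai : RC ai = cmul (cr_planar a z d) (RC aj).
  by rewrite HQ RC_div //; field; exact: RC_neq0.
split.
- apply: (can_inj conjK).
  rewrite !conj_add !conj_dual_edge // Hai cr_planar_div csub0.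
  by field; repeat split.
- rewrite cross_conj conj_add !conj_dual_edge //.
  have -> : cmul (cadd (cmul (RC ai) (cinv a)) (cmul (RC aj) (cinv (csub z a)))) (csub d a)
            = csub (RC aj) (RC ai).
    by rewrite Hai cr_planar_div csub0; field; repeat split.
  by rewrite /=; ring.
- rewrite cross_conj conj_sub !conj_dual_edge //.
  have -> : cmul (csub (cmul (RC aj) (cinv d)) (cmul (RC ai) (cinv a))) z
            = csub (RC aj) (RC ai).
    by rewrite Hai cr_planar_div csub0; field; repeat split.
  by rewrite /=; ring.
Qed.

Lemma planar_diagonal_label a z d sa sd :
  a <> c0 -> z <> a -> d <> c0 -> z <> d -> cross a z <> 0 ->
  cross (csub (cmul (RC sd) d) (cmul (RC sa) a)) z = 0 ->
  snd (cr_planar a z d) = 0 ->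
  sa * cnorm2 a = fst (cr_planar a z d) * (sd * cnorm2 d).
Proof.
move=> Ha Hb Hd Hc Hx1 Hdiag Hre.
have nb := csub_neq0 Hb; have nc := csub_neq0 Hc.
have nb' := csub_neq0 (nesym Hb).
set Q := cr_planar a z d; set rho := fst Q.
have HQ : Q = RC rho by apply: Ceq.
set ga := sa * cnorm2 a; set gd := sd * cnorm2 d.
move: Hdiag; rewrite cross_conj conj_sub !conj_RCmul // -/ga -/gd.
have -> : cmul (csub (cmul (RC gd) (cinv d)) (cmul (RC ga) (cinv a))) z =
    cadd (cmul (RC gd) (csub c1 Q)) (cmul (RC (rho * gd - ga)) (cdiv z a)).
  by rewrite RC_sub RC_mul -HQ /Q cr_planar_div csub0; field; repeat split.
have -> : forall X Y : C, snd (cadd X Y) = snd X + snd Y by [].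
rewrite !snd_RCmul snd_div_cross // HQ /= => E.
have : (rho * gd - ga) * (cross a z / cnorm2 a) = 0 by lra.
case/Rmult_integral => E2; first lra.
exfalso; move: E2; rewrite /Rdiv => /Rmult_integral [] //.
by apply/Rinv_neq_0_compat/cnorm2_neq0.
Qed.

Lemma planar_real_cr_of_dual a z d sa sb sc sd :
  a <> c0 -> z <> a -> d <> c0 -> z <> d ->
  cadd (cmul (RC sa) a) (cmul (RC sb) (csub z a)) =
    cadd (cmul (RC sc) (csub z d)) (cmul (RC sd) d) ->
  cross (csub (cmul (RC sd) d) (cmul (RC sa) a)) z = 0 ->
  snd (cr_planar a z d) = 0 ->
  cross a z <> 0 -> cross (csub z a) (csub z d) <> 0 -> sd <> 0 ->
  [/\ sa * cnorm2 a = sc * cnorm2 (csub z d),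
      sb * cnorm2 (csub z a) = sd * cnorm2 d &
      cr_planar a z d = RC (sa * cnorm2 a / (sd * cnorm2 d))].
Proof.
move=> Ha Hb Hd Hc Hcl Hdiag Hre Hx1 Hx2 Hsd.
have nb := csub_neq0 Hb; have nc := csub_neq0 Hc.
have nb' := csub_neq0 (nesym Hb).
set Q := cr_planar a z d; set rho := fst Q.
have HQ : Q = RC rho by apply: Ceq.
set ga := sa * cnorm2 a; set gb := sb * cnorm2 (csub z a).
set gc := sc * cnorm2 (csub z d); set gd := sd * cnorm2 d.
have gd0 : gd <> 0 by apply: Rmult_integral_contrapositive; split => //; exact: cnorm2_neq0.
have Hga : ga = rho * gd by exact: planar_diagonal_label.
(* conjugating the closing condition gives (gb - gd)(z-d) = (gc - rho gd)(z-a) *)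
have Hcl' := f_equal cconj Hcl.
rewrite !conj_add !conj_RCmul // -/ga -/gb -/gc -/gd in Hcl'.
have Hgb : RC gb = cmul (csub (cadd (cmul (RC gc) (cinv (csub z d))) (cmul (RC gd) (cinv d)))
                              (cmul (RC ga) (cinv a))) (csub z a).
  by rewrite -Hcl'; field; repeat split.
have E2 : cmul (RC (gb - gd)) (csub z d) = cmul (RC (gc - rho * gd)) (csub z a).
  rewrite !RC_sub RC_mul Hgb Hga RC_mul -HQ /Q cr_planar_div csub0.
  by field; repeat split.
(* z-a and z-d are independent, so both coefficients vanish *)
have Hbd : gb - gd = 0.
  have := f_equal (cross (csub z a)) E2.
  by rewrite !cross_RCr cross_self Rmult_0_r => /Rmult_integral [].
have Hac : gc - rho * gd = 0.
  case: (Req_dec (gc - rho * gd) 0) => // Hy0.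
  exfalso; apply: nb; move: E2; rewrite Hbd => E2.
  transitivity (cmul (cinv (RC (gc - rho * gd))) (cmul (RC (gc - rho * gd)) (csub z a))).
    by field; exact: RC_neq0.
  by rewrite -E2; apply: Ceq; rewrite /=; field.
split; [lra | lra |].
by rewrite -/Q HQ -/ga -/gd Hga; congr RC; field.
Qed.

(* Concyclic points: if 0, a, z, d are at equal distance from w, then
   q is real (inversion at 0 maps the circle to a line). *)
Lemma equidistant_half z w : z <> c0 -> cnorm2 (csub z w) = cnorm2 (csub c0 w) ->
  fst (cmul w (cinv z)) = / 2.
Proof.
move=> /cnorm2_neq0; rewrite /cnorm2; case: z => z1 z2; case: w => w1 w2 /= Hn E.
by field_simplify_eq; [nra | exact: Hn].
Qed.

Lemma ratio_real_of_imaginary x y : fst x = 0 -> fst y = 0 -> snd (cdiv x y) = 0.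
Proof. by case: x => x1 x2; case: y => y1 y2 /= -> ->; rewrite /=; unfold Rdiv; ring. Qed.

Lemma cr_planar_real_of_concyclic a z d w K :
  a <> c0 -> z <> c0 -> d <> c0 -> z <> a ->
  cnorm2 (csub c0 w) = K -> cnorm2 (csub a w) = K ->
  cnorm2 (csub z w) = K -> cnorm2 (csub d w) = K ->
  snd (cr_planar a z d) = 0.
Proof.
move=> Ha Hz Hd Hb H0 H1 H2 H3.
have Hw : w <> c0.
  move=> Ew; move: H0 H1; rewrite Ew => <-; rewrite /cnorm2.
  move: Ha; case: a {Hb} => a1 a2 Ha /= E; apply: Ha; apply: Ceq; rewrite /=; nra.
have nb := csub_neq0 Hb; have nb' := csub_neq0 (nesym Hb).
(* after inversion z -> w/z the four points lie on the line Re = 1/2 *)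
have Hden : csub (cmul w (cinv a)) (cmul w (cinv z)) <> c0.
  have -> : csub (cmul w (cinv a)) (cmul w (cinv z)) =
            cmul w (cmul (csub z a) (cinv (cmul a z))) by field; split.
  by apply: cmul_neq0 => //; apply: cmul_neq0 => //; apply/cinv_neq0/cmul_neq0.
have -> : cr_planar a z d = cdiv (csub (cmul w (cinv d)) (cmul w (cinv z)))
                                 (csub (cmul w (cinv a)) (cmul w (cinv z))).
  rewrite cr_planar_div csub0; field; repeat split => //.
  by move=> E; apply: (cmul_neq0 Hw nb); rewrite -E; ring.
have fsub : forall X Y : C, fst (csub X Y) = fst X - fst Y by [].
have ha := equidistant_half Ha (etrans H1 (esym H0)).
have hz := equidistant_half Hz (etrans H2 (esym H0)).
have hd := equidistant_half Hd (etrans H3 (esym H0)).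
by apply: ratio_real_of_imaginary; rewrite fsub; lra.
Qed.

Lemma planar_dual_nondeg (a z d : C) (pa pb pc pd : R) :
  pa <> 0 -> pb <> 0 -> pc <> 0 -> pd <> 0 ->
  let a' := cmul (RC pa) a in let b' := cmul (RC pb) (csub z a) in
  let c' := cmul (RC pc) (csub z d) in let d' := cmul (RC pd) d in
  cadd a' b' = cadd c' d' ->
  cross (cadd a' b') (csub d a) = 0 -> cross (csub d' a') z = 0 ->
  cross a z <> 0 -> cross a d <> 0 -> cross z d <> 0 ->
  cross (csub z a) (csub d a) <> 0 -> cross z (csub d a) <> 0 ->
  [/\ cross a' (cadd a' b') <> 0, cross a' d' <> 0, cross (cadd a' b') d' <> 0,
      cross (csub (cadd a' b') a') (csub d' a') <> 0 &
      cross (cadd a' b') (csub d' a') <> 0].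
Proof.
move=> ha hb hc hd a' b' c' d' Hcl D1 D2 X1 X2 X3 X4 X5.
have K1 : cross a' (cadd a' b') <> 0.
  rewrite cross_addr cross_self /a' /b' cross_scal cross_subr cross_self => E.
  have : pa * pb * cross a z = 0 by lra.
  by case/Rmult_integral => [/Rmult_integral [] //|].
have K2 : cross a' d' <> 0.
  by rewrite /a' /d' cross_scal => /Rmult_integral [/Rmult_integral [] //|].
have K3 : cross (cadd a' b') d' <> 0.
  rewrite Hcl cross_addl cross_self /c' /d' cross_scal cross_subl cross_self => E.
  have : pc * pd * cross z d = 0 by lra.
  by case/Rmult_integral => [/Rmult_integral [] //|].
split => //.
- have -> : csub (cadd a' b') a' = b' by apply: Ceq; rewrite /=; ring.
  have -> : csub d' a' = csub b' c'.
    by apply: Ceq; move: (f_equal fst Hcl) (f_equal snd Hcl); rewrite /=; lra.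
  rewrite cross_subr cross_self /b' /c' cross_scal.
  have -> : cross (csub z a) (csub z d) = - cross (csub z a) (csub d a).
    by rewrite /cross /=; ring.
  move=> E; have : pb * pc * cross (csub z a) (csub d a) = 0 by lra.
  by case/Rmult_integral => [/Rmult_integral [] //|].
- apply: (cross_parallel_neq0 D1 (y := z)) => //.
  + exact: cross_neq0_r K1.
  + move=> E; apply: K2.
    have -> : d' = a'.
      by apply: Ceq; move: (f_equal fst E) (f_equal snd E); rewrite /=; lra.
    exact: cross_self.
  + by rewrite cross_anti => E; apply: X5; lra.
Qed.

Lemma planar_diagonal_point (a z d : C) : cross z (csub d a) <> 0 ->
  cmul (RC (cross a (csub d a) / cross z (csub d a))) z =
  cadd a (cmul (RC (cross a z / cross z (csub d a))) (csub d a)).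
Proof.
rewrite /cross; case: a => a1 a2; case: z => z1 z2; case: d => d1 d2 /= X5.
by apply: Ceq; rewrite /=; field.
Qed.

Section Quadrilaterals.
Variable N : nat.
Implicit Types A B X D V W : Vec N.

Lemma line_param_inj V W r r' : V <> W ->
  vadd V (vscale r (vsub W V)) = vadd V (vscale r' (vsub W V)) -> r = r'.
Proof.
move=> HVW E; have /vsub_neq0 HWV := nesym HVW.
apply: Rminus_diag_uniq; case: (Req_dec (r - r') 0) => // Hr; exfalso.
apply: HWV; apply: vext => k; move: (f_equal (fun U => U k) E).
rewrite /vadd /vscale /vsub /vzero => Ek.
have : (r - r') * (W k - V k) = 0 by lra.
by case/Rmult_integral.
Qed.

Lemma line_param_start V W r : V <> W -> V = vadd V (vscale r (vsub W V)) -> r = 0.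
Proof.
move=> H E; apply: (line_param_inj H); rewrite -E.
by apply: vext => k; rewrite /vadd /vscale /vsub; ring.
Qed.

Lemma line_param_end V W r : V <> W -> W = vadd V (vscale r (vsub W V)) -> r = 1.
Proof.
move=> H E; apply: (line_param_inj H); rewrite -E.
by apply: vext => k; rewrite /vadd /vscale /vsub; ring.
Qed.

Variables e1 e2 : Vec N.
Hypothesis Ho : orthonormal e1 e2.

Lemma diagonal_point_of_planar A B X D :
  in_plane e1 e2 (vsub B A) -> in_plane e1 e2 (vsub X A) -> in_plane e1 e2 (vsub D A) ->
  let a := coord e1 e2 (vsub B A) in let z := coord e1 e2 (vsub X A) in
  let d := coord e1 e2 (vsub D A) in
  cross a z <> 0 -> cross a d <> 0 -> cross z d <> 0 ->
  cross (csub z a) (csub d a) <> 0 -> cross z (csub d a) <> 0 -> A <> X -> B <> D ->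
  exists P : Vec N, on_line P A X /\ on_line P B D /\
    [/\ P <> A, P <> B, P <> X & P <> D].
Proof.
move=> hB hX hD a z d X1 X2 X3 X4 X5 dAX dBD.
set s := cross a (csub d a) / cross z (csub d a).
set t := cross a z / cross z (csub d a).
have EP : vadd A (vscale s (vsub X A)) = vadd B (vscale t (vsub D B)).
  suff : vsub (vadd A (vscale s (vsub X A))) A = vsub (vadd B (vscale t (vsub D B))) A.
    by move=> E; apply: vext => k; move: (f_equal (fun W => W k) E); rewrite /vsub => Ek; lra.
  have -> : vsub (vadd A (vscale s (vsub X A))) A = vscale s (vsub X A).
    by apply: vext => k; rewrite /vsub /vadd /vscale; ring.
  have -> : vsub (vadd B (vscale t (vsub D B))) A = vadd (vsub B A) (vscale t (vsub D B)).
    by apply: vext => k; rewrite /vsub /vadd /vscale; ring.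
  apply: (coord_inj Ho); first exact: in_plane_scale.
    by apply: in_plane_add => //; apply/in_plane_scale/(in_plane_diff hD hB).
  rewrite coord_scale coord_add coord_scale (coord_diff _ _ D B A) -/a -/z -/d.
  exact: planar_diagonal_point.
have inv_ne0 := Rinv_neq_0_compat _ X5.
exists (vadd A (vscale s (vsub X A))).
split; first by exists s.
split; first by rewrite EP; exists t.
split.
- move=> /esym /(line_param_start dAX); rewrite /s /Rdiv => /Rmult_integral [].
    by rewrite cross_subr cross_self => H; apply: X2; lra.
  exact: inv_ne0.
- rewrite EP => /esym /(line_param_start dBD); rewrite /t /Rdiv.
  by case/Rmult_integral => //; exact: inv_ne0.
- move=> /esym /(line_param_end dAX) Hs; apply: X4; move: Hs; rewrite /s => Hs.
  have : cross a (csub d a) = cross z (csub d a) by field_simplify_eq in Hs.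
  by rewrite /cross /=; lra.
- rewrite EP => /esym /(line_param_end dBD) Ht; apply: X3; move: Ht; rewrite /t => Ht.
  have : cross a z = cross z (csub d a) by field_simplify_eq in Ht.
  by rewrite /cross /=; lra.
Qed.

Lemma good_quad_of_planar A B X D :
  in_plane e1 e2 (vsub B A) -> in_plane e1 e2 (vsub X A) -> in_plane e1 e2 (vsub D A) ->
  let a := coord e1 e2 (vsub B A) in let z := coord e1 e2 (vsub X A) in
  let d := coord e1 e2 (vsub D A) in
  cross a z <> 0 -> cross a d <> 0 -> cross z d <> 0 ->
  cross (csub z a) (csub d a) <> 0 -> cross z (csub d a) <> 0 ->
  good_quad A B X D.
Proof.
move=> hB hX hD a z d X1 X2 X3 X4 X5.
have N1 : ~ collinear A B X by apply/(not_collinear_cross Ho hB hX).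
have N2 : ~ collinear A B D by apply/(not_collinear_cross Ho hB hD).
have N3 : ~ collinear A X D by apply/(not_collinear_cross Ho hX hD).
have N4 : ~ collinear B X D.
  apply/(not_collinear_cross Ho (in_plane_diff hX hB) (in_plane_diff hD hB)).
  by rewrite (coord_diff _ _ X B A) (coord_diff _ _ D B A).
have [d1 d2 d3] := not_collinear_neq N1.
have [_ d4 _] := not_collinear_neq N2.
have [_ d5 _] := not_collinear_neq N4.
have [_ _ d6] := not_collinear_neq N3.
split.
  exists (cross z d), (cross d a), (cross a z); split.
    by right; left; rewrite cross_anti; lra.
  apply: (coord_eq0 Ho).
  - by apply: in_plane_add; [apply: in_plane_add|]; apply: in_plane_scale.
  - rewrite !coord_add !coord_scale -/a -/z -/d.
    by rewrite /c0; apply: Ceq; rewrite /cross /=; ring.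
do 3 (split; first by split).
exact: (diagonal_point_of_planar hB hX hD).
Qed.
End Quadrilaterals.

Section QuadrilateralFrame.
Variable N : nat.
Implicit Types A B X D Y : Vec N.

Lemma good_quad_frame A B X D : good_quad A B X D ->
  let e1 := frame1 A B in let e2 := frame2 A B D in
  [/\ orthonormal e1 e2, in_plane e1 e2 (vsub B A), in_plane e1 e2 (vsub X A),
      in_plane e1 e2 (vsub D A) &
   let a := coord e1 e2 (vsub B A) in let z := coord e1 e2 (vsub X A) in
   let d := coord e1 e2 (vsub D A) in
   [/\ cross a z <> 0, cross a d <> 0, cross z d <> 0,
       cross (csub z a) (csub d a) <> 0 & cross z (csub d a) <> 0]].
Proof.
case=> Hpl [_ [_ [[N1 N2 N3 N4] [P [[s HPs] [[t HPt] _]]]]]] e1 e2.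
have [Ho hB hD] := gram_schmidt_frame N2.
have hX : in_plane e1 e2 (vsub X A).
  case: Hpl => l1 [l2 [l3 [Hl E]]].
  case: (Req_dec l2 0) => Hl2.
    exfalso; apply: N2; exists l1, l3; split.
      by case: Hl => [?|[?|?]]; [left|lra|right].
    by rewrite -E Hl2; apply: vext => k; rewrite /vadd /vscale; ring.
  have -> : vsub X A = vscale (- / l2) (vadd (vscale l1 (vsub B A)) (vscale l3 (vsub D A))).
    apply: vext => k; move: (f_equal (fun W => W k) E).
    rewrite /vadd /vscale /vzero => Ek.
    apply: (Rmult_eq_reg_l l2) => //; rewrite -Rmult_assoc Ropp_mult_distr_r_reverse Rinv_r //.
    by lra.
  by apply/in_plane_scale/in_plane_add; apply: in_plane_scale.
split => // a z d.
have X1 : cross a z <> 0 by apply/(not_collinear_cross Ho hB hX).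
have X2 : cross a d <> 0 by apply/(not_collinear_cross Ho hB hD).
have X3 : cross z d <> 0 by apply/(not_collinear_cross Ho hX hD).
have X4 : cross (csub z a) (csub d a) <> 0.
  rewrite -(coord_diff _ _ X B A) -(coord_diff _ _ D B A).
  exact/(not_collinear_cross Ho (in_plane_diff hX hB) (in_plane_diff hD hB)).
split => // X5.
(* the diagonals meet: s (C-A) = (B-A) + t (D-B), so [a z] = 0 *)
have E : vscale s (vsub X A) = vadd (vsub B A) (vscale t (vsub D B)).
  apply: vext => k; move: (f_equal (fun W => W k) HPs) (f_equal (fun W => W k) HPt).
  by rewrite /vadd /vscale /vsub => e1k e2k; lra.
have := f_equal (coord e1 e2) E.
rewrite coord_scale coord_add coord_scale (coord_diff _ _ D B A) -/a -/z -/d => Ek.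
apply: X1; have := f_equal (cross z) Ek.
by rewrite cross_addr !cross_RCr cross_self X5 cross_anti; lra.
Qed.
End QuadrilateralFrame.

Section DualQuadrilaterals.
Variable N : nat.
Implicit Types A B X D Y V W : Vec N.

Lemma parallel_scaled r V : parallel (vscale r V) V.
Proof.
exists 1, (- r); split; first by left; lra.
by apply: vext => k; rewrite /vadd /vscale /vzero; ring.
Qed.

Lemma parallel_multiple W V : parallel W V -> V <> @vzero N -> exists s, W = vscale s V.
Proof.
case=> l1 [l2 [Hl E]] HV.
have Ek k : l1 * W k + l2 * V k = 0 by move: (f_equal (fun U => U k) E).
case: (Req_dec l1 0) => Hl1.
- exfalso; apply: HV; apply: vext => k; have := Ek k; rewrite Hl1 /vzero.
  have Hl2 : l2 <> 0 by case: Hl.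
  by move=> H; have /Rmult_integral [] : l2 * V k = 0 by lra.
- exists (- l2 / l1); apply: vext => k; have := Ek k; rewrite /vscale => H.
  by field_simplify_eq => //; lra.
Qed.

Lemma dist_in_plane e1 e2 Y n : orthonormal e1 e2 -> in_plane e1 e2 Y ->
  let p := vadd (vscale (fst (coord e1 e2 n)) e1) (vscale (snd (coord e1 e2 n)) e2) in
  dot (vsub Y n) (vsub Y n) =
  cnorm2 (csub (coord e1 e2 Y) (coord e1 e2 n)) + dot (vsub n p) (vsub n p).
Proof.
move=> Ho hY p.
have EY := in_plane_coord Ho hY.
set y1 := fst (coord e1 e2 Y) in EY *; set y2 := snd (coord e1 e2 Y) in EY *.
set w1 := fst (coord e1 e2 n); set w2 := snd (coord e1 e2 n).
set h := vsub n p.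
case: (Ho) => h11 h22 h12.
have he1 : dot h e1 = 0.
  by rewrite /h /p dot_subl dot_addl !dot_scalel h11 (dotC e2 e1) h12 /w1 /coord /=; ring.
have he2 : dot h e2 = 0.
  by rewrite /h /p dot_subl dot_addl !dot_scalel h22 h12 /w2 /coord /=; ring.
set U := vadd (vscale (y1 - w1) e1) (vscale (y2 - w2) e2).
have EU : vsub Y n = vsub U h.
  apply: vext => k; move: (f_equal (fun W => W k) EY).
  by rewrite /U /h /p /w1 /w2 /vsub /vadd /vscale => ->; ring.
have hU : in_plane e1 e2 U by exists (y1 - w1), (y2 - w2).
have Uh : dot U h = 0.
  by rewrite /U dot_addl !dot_scalel (dotC e1 h) (dotC e2 h) he1 he2; ring.
rewrite EU dot_sub_sq Uh (dot_self_coord Ho hU) /U coord_comb //.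
by rewrite /cnorm2 /csub /y1 /y2 /w1 /w2 /=; ring.
Qed.

Lemma concircular_cross_ratio_real A B X D :
  good_quad A B X D -> concircular A B X D -> snd (cross_ratio A B X D) = 0.
Proof.
move=> Hg [c [f1 [f2 [rho [_ [[_ HA] [_ HB] [_ HX] [_ HD]]]]]]].
have [Ho hB hX hD] := good_quad_frame Hg.
rewrite cross_ratio_planar; set e1 := frame1 A B; set e2 := frame2 A B D.
move=> [X1 X2 X3 X4 _].
have hA : in_plane e1 e2 (vsub A A).
  by rewrite vsubxx; exists 0, 0; apply: vext => k; rewrite /vadd /vscale /vzero; ring.
set n := vsub c A.
have dist Y : in_plane e1 e2 (vsub Y A) -> dot (vsub Y c) (vsub Y c) =
    cnorm2 (csub (coord e1 e2 (vsub Y A)) (coord e1 e2 n)) + _ :=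
  fun h => etrans (f_equal (fun W => dot W W) (vsub_via Y c A)) (dist_in_plane n Ho h).
move: (dist A hA) (dist B hB) (dist X hX) (dist D hD).
rewrite HA HB HX HD vsubxx coord_zero; set M := dot _ _ => EA EB EX ED.
apply: (cr_planar_real_of_concyclic (w := coord e1 e2 n) (K := rho * rho - M)); try lra.
- exact: cross_neq0_l X1.
- exact: cross_neq0_r X1.
- exact: cross_neq0_r X2.
- by move=> E; apply: X4; rewrite E /cross /=; ring.
Qed.

Lemma dual_edges_multiples A B X D A' B' X' D' :
  good_quad A B X D -> good_quad A' B' X' D' ->
  parallel (vsub B' A') (vsub B A) -> parallel (vsub X' B') (vsub X B) ->
  parallel (vsub D' X') (vsub D X) -> parallel (vsub A' D') (vsub A D) ->
  exists sa sb sc sd,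
    [/\ vsub B' A' = vscale sa (vsub B A), vsub X' B' = vscale sb (vsub X B),
        vsub X' D' = vscale sc (vsub X D) & vsub D' A' = vscale sd (vsub D A)] /\ sd <> 0.
Proof.
move=> [_ [[dAB _ dAD dBX] [[_ dXD] _]]] [_ [[_ _ dAD' _] _]] p1 p2 p3 p4.
have [sa Ea] := parallel_multiple p1 (vsub_neq0 (nesym dAB)).
have [sb Eb] := parallel_multiple p2 (vsub_neq0 (nesym dBX)).
have [sc Ec] := parallel_multiple p3 (vsub_neq0 (nesym dXD)).
have [sd Ed] := parallel_multiple p4 (vsub_neq0 dAD).
have flip Y Z Y' Z' s : vsub Y' Z' = vscale s (vsub Y Z) -> vsub Z' Y' = vscale s (vsub Z Y).
  move=> E; apply: vext => k; move: (f_equal (fun W => W k) E).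
  by rewrite /vsub /vscale => Ek; lra.
exists sa, sb, sc, sd; split; first by split => //; apply: flip.
move=> E0; apply: dAD'; apply: vext => k; move: (f_equal (fun W => W k) Ed).
by rewrite /vsub /vscale E0; lra.
Qed.

Lemma cross_ratio_of_dual_quad A B X D A' B' X' D' :
  good_quad A B X D -> concircular A B X D -> good_quad A' B' X' D' ->
  dual_quads A B X D A' B' X' D' ->
  [/\ dot (vsub B' A') (vsub B A) = dot (vsub X' D') (vsub X D),
      dot (vsub X' B') (vsub X B) = dot (vsub D' A') (vsub D A) &
      cross_ratio A B X D =
        (dot (vsub B' A') (vsub B A) / dot (vsub D' A') (vsub D A), 0)].
Proof.
move=> Hg Hcirc Hg' [[p1 p2 p3 p4] [_ p6]].
have Hre := concircular_cross_ratio_real Hg Hcirc.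
have [Ho hB hX hD] := good_quad_frame Hg.
rewrite cross_ratio_planar in Hre *; set e1 := frame1 A B; set e2 := frame2 A B D.
rewrite -/e1 -/e2 in Hre.
set a := coord e1 e2 (vsub B A); set z := coord e1 e2 (vsub X A).
set d := coord e1 e2 (vsub D A) => -[X1 X2 X3 X4 X5].
have ha : a <> c0 := cross_neq0_l X1.
have hd : d <> c0 := cross_neq0_r X2.
have hza : z <> a by move=> E; apply: X4; rewrite E /cross /=; ring.
have hzd : z <> d by move=> E; apply: X3; rewrite E cross_self.
have hXB := in_plane_diff hX hB; have hXD := in_plane_diff hX hD.
have kXB : coord e1 e2 (vsub X B) = csub z a by rewrite (coord_diff _ _ X B A).
have kXD : coord e1 e2 (vsub X D) = csub z d by rewrite (coord_diff _ _ X D A).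
have [sa [sb [sc [sd [[Ea Eb Ec Ed] hsd]]]]] := dual_edges_multiples Hg Hg' p1 p2 p3 p4.
have Kcl : cadd (cmul (RC sa) a) (cmul (RC sb) (csub z a)) =
           cadd (cmul (RC sc) (csub z d)) (cmul (RC sd) d).
  rewrite -kXB -kXD -!coord_scale -!coord_add; congr coord.
  by rewrite -Ea -Eb -Ec -Ed; apply: vext => k; rewrite /vadd /vsub; ring.
have Kdiag : cross (csub (cmul (RC sd) d) (cmul (RC sa) a)) z = 0.
  have ED2 : vsub D' B' = vsub (vscale sd (vsub D A)) (vscale sa (vsub B A)).
    by rewrite -Ed -Ea; apply: vext => k; rewrite /vsub; ring.
  move: p6; rewrite ED2 => /(lin_dep2_cross Ho _ hX).
  rewrite coord_sub !coord_scale; apply.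
  by apply: in_plane_sub; apply: in_plane_scale.
have X4' : cross (csub z a) (csub z d) <> 0.
  have -> : cross (csub z a) (csub z d) = - cross (csub z a) (csub d a).
    by rewrite /cross /=; ring.
  lra.
have [R1 R2 R3] := planar_real_cr_of_dual ha hza hd hzd Kcl Kdiag Hre X1 X4' hsd.
rewrite Ea Eb Ec Ed !dot_scalel !(dot_self_coord Ho) // kXB kXD.
by split.
Qed.
End DualQuadrilaterals.

Section DualConstruction.
Variable N : nat.
Implicit Types A B X D Y : Vec N.

Definition dual_edge_vec X Y (r : R) : Vec N :=
  vscale (r / dot (vsub Y X) (vsub Y X)) (vsub Y X).

Lemma coord_dual_edge_vec e1 e2 X Y r : orthonormal e1 e2 ->
  in_plane e1 e2 (vsub Y X) -> coord e1 e2 (vsub Y X) <> c0 ->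
  coord e1 e2 (dual_edge_vec X Y r) = dual_edge (coord e1 e2 (vsub Y X)) r.
Proof.
by move=> Ho h hn; rewrite /dual_edge_vec coord_scale (dot_self_coord Ho h) dual_edge_scale.
Qed.

(* The cross-ratio of a planar non-degenerate quadrilateral is nonzero, so
   a factorisation q = ai/aj has nonzero labels. *)
Lemma cross_ratio_labels_neq0 A B X D ai aj : good_quad A B X D ->
  cross_ratio A B X D = (ai / aj, 0) -> ai <> 0 /\ aj <> 0.
Proof.
move=> Hg Hq; have [Ho hB hX hD] := good_quad_frame Hg.
rewrite cross_ratio_planar in Hq; move: Hq.
set a := coord _ _ (vsub B A); set z := coord _ _ (vsub X A).
set d := coord _ _ (vsub D A) => Hq [X1 X2 X3 X4 _].
have hza : z <> a by move=> E; apply: X4; rewrite E /cross /=; ring.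
have hzd : z <> d by move=> E; apply: X3; rewrite E cross_self.
have hQ := cr_planar_neq0 (cross_neq0_l X1) hza (cross_neq0_r X2) hzd.
by split => E; apply: hQ; rewrite Hq E /Rdiv ?Rinv_0 (Rmult_0_l, Rmult_0_r).
Qed.

Lemma dual_quad_sides A B X D ai aj A' B' X' D' :
  vadd (dual_edge_vec A B ai) (dual_edge_vec B X aj) =
    vadd (dual_edge_vec A D aj) (dual_edge_vec D X ai) ->
  B' = vadd A' (dual_edge_vec A B ai) -> X' = vadd B' (dual_edge_vec B X aj) ->
  D' = vadd A' (dual_edge_vec A D aj) ->
  [/\ vsub B' A' = dual_edge_vec A B ai, vsub X' B' = dual_edge_vec B X aj,
      vsub X' A' = vadd (dual_edge_vec A B ai) (dual_edge_vec B X aj),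
      vsub D' A' = dual_edge_vec A D aj &
      vsub D' B' = vsub (dual_edge_vec A D aj) (dual_edge_vec A B ai)] /\
  vsub D' X' = vscale (ai / dot (vsub X D) (vsub X D)) (vsub D X) /\
  vsub A' D' = vscale (aj / dot (vsub D A) (vsub D A)) (vsub A D).
Proof.
move=> Hcl -> -> ->; split; first by split; apply: vext => k; rewrite /vsub /vadd; ring.
split.
- apply: vext => k; move: (f_equal (fun W => W k) Hcl).
  by rewrite /vsub /vadd /dual_edge_vec /vscale /vsub => Hk; lra.
- by apply: vext => k; rewrite /vsub /vadd /dual_edge_vec /vscale /vsub; ring.
Qed.

Lemma dual_quad_of_cross_ratio A B X D ai aj : good_quad A B X D ->
  cross_ratio A B X D = (ai / aj, 0) ->
  vadd (dual_edge_vec A B ai) (dual_edge_vec B X aj) =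
    vadd (dual_edge_vec A D aj) (dual_edge_vec D X ai) /\
  forall A' B' X' D', B' = vadd A' (dual_edge_vec A B ai) ->
    X' = vadd B' (dual_edge_vec B X aj) -> D' = vadd A' (dual_edge_vec A D aj) ->
    good_quad A' B' X' D' /\ dual_quads A B X D A' B' X' D'.
Proof.
move=> Hg Hq; have [hai haj] := cross_ratio_labels_neq0 Hg Hq.
have [Ho hB hX hD] := good_quad_frame Hg.
rewrite cross_ratio_planar in Hq; set e1 := frame1 A B; set e2 := frame2 A B D.
move: Hq; set a := coord e1 e2 (vsub B A); set z := coord e1 e2 (vsub X A).
set d := coord e1 e2 (vsub D A) => HQ [X1 X2 X3 X4 X5].
have ha : a <> c0 := cross_neq0_l X1.
have hd : d <> c0 := cross_neq0_r X2.
have hza : z <> a by move=> E; apply: X4; rewrite E /cross /=; ring.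
have hzd : z <> d by move=> E; apply: X3; rewrite E cross_self.
have hXB := in_plane_diff hX hB; have hDB := in_plane_diff hD hB.
have hXD := in_plane_diff hX hD.
have kXB : coord e1 e2 (vsub X B) = csub z a by rewrite (coord_diff _ _ X B A).
have kDB : coord e1 e2 (vsub D B) = csub d a by rewrite (coord_diff _ _ D B A).
have kXD : coord e1 e2 (vsub X D) = csub z d by rewrite (coord_diff _ _ X D A).
have k1 : coord e1 e2 (dual_edge_vec A B ai) = dual_edge a ai by rewrite coord_dual_edge_vec.
have nXB : coord e1 e2 (vsub X B) <> c0 by rewrite kXB; exact: csub_neq0.
have nXD : coord e1 e2 (vsub X D) <> c0 by rewrite kXD; exact: csub_neq0.
have k2 : coord e1 e2 (dual_edge_vec B X aj) = dual_edge (csub z a) aj.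
  by rewrite coord_dual_edge_vec // kXB.
have k3 : coord e1 e2 (dual_edge_vec D X ai) = dual_edge (csub z d) ai.
  by rewrite coord_dual_edge_vec // kXD.
have k4 : coord e1 e2 (dual_edge_vec A D aj) = dual_edge d aj by rewrite coord_dual_edge_vec.
have i1 : in_plane e1 e2 (dual_edge_vec A B ai) by apply: in_plane_scale.
have i2 : in_plane e1 e2 (dual_edge_vec B X aj) by apply: in_plane_scale.
have i3 : in_plane e1 e2 (dual_edge_vec D X ai) by apply: in_plane_scale.
have i4 : in_plane e1 e2 (dual_edge_vec A D aj) by apply: in_plane_scale.
have [cl D1 D2] := planar_dual_of_real_cr ha hza hd hzd haj HQ.
have Hcl : vadd (dual_edge_vec A B ai) (dual_edge_vec B X aj) =
           vadd (dual_edge_vec A D aj) (dual_edge_vec D X ai).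
  apply: (coord_inj Ho); try by apply: in_plane_add.
  by rewrite !coord_add k1 k2 k3 k4 cl; apply: Ceq; rewrite /=; ring.
split => // A' B' X' D' EB EX ED.
have [[eBA eXB eXA eDA eDB] [eDX eAD]] := dual_quad_sides Hcl EB EX ED.
split.
- have pos_label r v : r <> 0 -> v <> c0 -> r / cnorm2 v <> 0.
    move=> hr hv; apply: Rmult_integral_contrapositive; split => //.
    exact/Rinv_neq_0_compat/cnorm2_neq0.
  have pa := pos_label _ _ hai ha; have pd := pos_label _ _ haj hd.
  have pb := pos_label _ _ haj (csub_neq0 hza).
  have pc := pos_label _ _ hai (csub_neq0 hzd).
  have cl' := cl; have D1' := D1; have D2' := D2.
  have nza := csub_neq0 hza; have nzd := csub_neq0 hzd.
  rewrite !dual_edge_scale // in cl' D1' D2'.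
  have [Y1 Y2 Y3 Y4 Y5] := planar_dual_nondeg pa pb pc pd cl' D1' D2' X1 X2 X3 X4 X5.
  apply: (good_quad_of_planar Ho); rewrite ?eBA ?eXA ?eDA //; try exact: in_plane_add.
  all: rewrite ?coord_add ?k1 ?k2 ?k4 ?dual_edge_scale //.
- split; first split.
  + by rewrite eBA; exact: parallel_scaled.
  + by rewrite eXB; exact: parallel_scaled.
  + by rewrite eDX; exact: parallel_scaled.
  + by rewrite eAD; exact: parallel_scaled.
  split.
  + rewrite eXA; apply/(lin_dep2_cross Ho _ hDB); first exact: in_plane_add.
    by rewrite coord_add k1 k2 kDB.
  + rewrite eDB; apply/(lin_dep2_cross Ho _ hX); first exact: in_plane_sub.
    by rewrite coord_sub k4 k1.
Qed.
End DualConstruction.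

(* zsum h n = h 0 + ... + h (n-1) for n >= 0, and - (h n + ... + h (-1))
   for n < 0, so that zsum h (n+1) = zsum h n + h n for every n. *)
Fixpoint nsum_up (h : Z -> R) (k : nat) : R :=
  match k with O => 0 | S k' => nsum_up h k' + h (Z.of_nat k') end.
Fixpoint nsum_down (h : Z -> R) (k : nat) : R :=
  match k with O => 0 | S k' => nsum_down h k' + h (- Z.of_nat k' - 1)%Z end.
Definition zsum (h : Z -> R) (n : Z) : R :=
  if (0 <=? n)%Z then nsum_up h (Z.to_nat n) else - nsum_down h (Z.to_nat (- n)).

Lemma zsum_step h n : zsum h (n + 1) = zsum h n + h n.
Proof.
rewrite /zsum; case: (Z.leb_spec 0 n) => Hn.
- have -> : (0 <=? n + 1)%Z = true by apply/Z.leb_le; lia.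
  rewrite (_ : Z.to_nat (n + 1) = S (Z.to_nat n)); last by lia.
  by rewrite /= Z2Nat.id.
- case: (Z.leb_spec 0 (n + 1)) => Hn1.
  + have -> : n = (-1)%Z by lia.
    by rewrite /=; ring.
  + rewrite (_ : Z.to_nat (- n) = S (Z.to_nat (- (n + 1)))); last by lia.
    rewrite /= Z2Nat.id; last by lia.
    have -> : (- (- (n + 1)) - 1)%Z = n by lia.
    ring.
Qed.

Lemma Z_bi_ind (P : Z -> Prop) :
  P 0%Z -> (forall n, P n <-> P (n + 1)%Z) -> forall n, P n.
Proof.
move=> H0 HS n; apply: (Z.peano_ind P) => //.
- by move=> k /HS; rewrite Z.add_1_r.
- by move=> k Hk; apply/(HS (Z.pred k)); rewrite Z.add_1_r Z.succ_pred.
Qed.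

Lemma zsum_telescope (g G : Z -> R) : (forall t, g t = G (t + 1)%Z - G t) ->
  forall n, zsum g n = G n - G 0%Z.
Proof.
move=> Hg; apply: Z_bi_ind; first by rewrite /zsum /=; ring.
by move=> n; rewrite zsum_step Hg; split => E; lra.
Qed.

Lemma zsum_add (g1 g2 : Z -> R) n :
  zsum (fun t => g1 t + g2 t) n = zsum g1 n + zsum g2 n.
Proof.
move: n; apply: Z_bi_ind; first by rewrite /zsum /=; ring.
by move=> n; rewrite !zsum_step; split => E; lra.
Qed.

Section LatticeMoves.
Variable m : nat.
Implicit Types u : 'I_m -> Z.

Definition upd u (k : 'I_m) (t : Z) : 'I_m -> Z :=
  fun l => if l == k then t else u l.

Lemma lshift_comm u i j : lshift_e (lshift_e u i) j = lshift_e (lshift_e u j) i.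
Proof.
by apply: functional_extensionality => l; rewrite /lshift_e; case: (l == i); case: (l == j).
Qed.
Lemma lshift_same u k : lshift_e u k k = (u k + 1)%Z.
Proof. by rewrite /lshift_e eqxx. Qed.
Lemma lshift_other u i k : i <> k -> lshift_e u i k = u k.
Proof. by move=> H; rewrite /lshift_e; case: (eqVneq k i) => // E; rewrite E in H. Qed.
Lemma upd_lshift_same u k t : upd (lshift_e u k) k t = upd u k t.
Proof. by apply: functional_extensionality => l; rewrite /upd /lshift_e; case: (l == k). Qed.
Lemma upd_lshift_other u i k t : i <> k -> upd (lshift_e u i) k t = lshift_e (upd u k t) i.
Proof.
move=> Hik; apply: functional_extensionality => l; rewrite /upd /lshift_e.
by case: (eqVneq l k) => [->|//]; case: (eqVneq k i) => // E; rewrite E in Hik.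
Qed.
Lemma upd_id u k : upd u k (u k) = u.
Proof. by apply: functional_extensionality => l; rewrite /upd; case: (eqVneq l k) => [->|]. Qed.
Lemma upd_succ u k t : upd u k (t + 1)%Z = lshift_e (upd u k t) k.
Proof. by apply: functional_extensionality => l; rewrite /upd /lshift_e; case: (eqVneq l k). Qed.
End LatticeMoves.

(* A closed discrete 1-form on Z^m is exact.  The potential integrates g
   along the staircase path from 0 to u that moves along the axes
   0, 1, ..., k-1 in turn. *)
Section ClosedForms.
Variable m : nat.
Variable g : 'I_m -> ('I_m -> Z) -> R.
Hypothesis g_closed : forall u i j, i <> j ->
  g i u + g j (lshift_e u i) = g j u + g i (lshift_e u j).

Fixpoint staircase_integral (k : nat) (u : 'I_m -> Z) : R :=
  match k with
  | O => 0
  | S k' => match insub k' with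
            | Some kk => staircase_integral k' (upd u kk 0)
                         + zsum (fun t => g kk (upd u kk t)) (u kk)
            | None => staircase_integral k' u
            end
  end.

Lemma staircase_integral_step k : forall u (i : 'I_m), (val i < k)%N ->
  staircase_integral k (lshift_e u i) = staircase_integral k u + g i u.
Proof.
elim: k => [|k IH] u i Hi //=.
have lt_k (kk : 'I_m) : (val i < k.+1)%N -> i <> kk -> (val kk = k) -> (val i < k)%N.
  move=> Hik Hne Ek; move: Hik; rewrite ltnS leq_eqVlt => /orP [/eqP E|//].
  by exfalso; apply: Hne; apply: val_inj; rewrite /= Ek.
case: insubP => [kk _ Ek|Hk]; last first.
  rewrite IH //; move: Hi; rewrite ltnS leq_eqVlt => /orP [/eqP E|//].
  by move: Hk; rewrite -E ltn_ord.
case: (eqVneq i kk) => [->|/eqP Nik].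
- (* moving along the last axis only extends the last segment *)
  have -> : (fun t => g kk (upd (lshift_e u kk) kk t)) = (fun t => g kk (upd u kk t)).
    by apply: functional_extensionality => t; rewrite upd_lshift_same.
  by rewrite upd_lshift_same lshift_same zsum_step upd_id; ring.
- (* moving along an earlier axis shifts the last segment, whose change
     telescopes by closedness *)
  rewrite upd_lshift_other // IH ?(lt_k kk) // lshift_other //.
  have -> : (fun t => g kk (upd (lshift_e u i) kk t)) =
            (fun t => g kk (upd u kk t) + (g i (upd u kk (t + 1)%Z) - g i (upd u kk t))).
    apply: functional_extensionality => t; rewrite upd_lshift_other // upd_succ.
    by have := g_closed (upd u kk t) Nik; lra.
  rewrite zsum_add (@zsum_telescope (fun t => g i (upd u kk (t + 1)) - g i (upd u kk t))
                                    (fun t => g i (upd u kk t))) // upd_id.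
  ring.
Qed.
End ClosedForms.

Lemma closed_form_exact (m N : nat) (om : 'I_m -> ('I_m -> Z) -> Vec N) :
  (forall u i j, i <> j ->
     vadd (om i u) (om j (lshift_e u i)) = vadd (om j u) (om i (lshift_e u j))) ->
  exists F : ('I_m -> Z) -> Vec N, forall u i, F (lshift_e u i) = vadd (F u) (om i u).
Proof.
move=> Hcl; exists (fun u c => staircase_integral (fun i v => om i v c) m u).
move=> u i; apply: functional_extensionality => c.
rewrite /vadd staircase_integral_step //; last exact: ltn_ord.
by move=> v i' j' H; have := f_equal (fun W => W c) (Hcl v i' j' H); rewrite /vadd.
Qed.

Section Labellings.
Variable m : nat.
Variable L : 'I_m -> ('I_m -> Z) -> R.
Hypothesis L_inv : forall u i j, i <> j -> L i (lshift_e u j) = L i u.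

Lemma label_upd u i j t : i <> j -> L i (upd u j t) = L i u.
Proof.
move=> Hij.
have H t' : L i (upd u j t') = L i (upd u j 0).
  move: t'; apply: Z_bi_ind => // n; rewrite upd_succ L_inv //.
by rewrite H -(H (u j)) upd_id.
Qed.

Lemma label_own_coordinate u i : L i u = L i (upd (fun _ => 0%Z) i (u i)).
Proof.
set v := upd (fun _ => 0%Z) i (u i).
(* replace the coordinates of u by those of v one index at a time *)
set w := fun k (l : 'I_m) => if (val l < k)%N then v l else u l.
suff step : forall k, L i (w k) = L i u.
  rewrite -(step m) /w; congr (L i); apply: functional_extensionality => l.
  by rewrite ltn_ord.
elim=> [|k IH].
  by congr (L i); apply: functional_extensionality => l.
case: (ltnP k m) => Hk; last first.
  rewrite -IH; congr (L i); apply: functional_extensionality => l.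
  have /leq_trans/(_ Hk) h := ltn_ord l.
  by rewrite /w h (leq_trans h).
set kk := Ordinal Hk.
have -> : w k.+1 = upd (w k) kk (v kk).
  apply: functional_extensionality => l; rewrite /w /upd.
  case: (eqVneq l kk) => [->|Hl]; first by rewrite /= ltnSn.
  rewrite ltnS leq_eqVlt; case: (eqVneq (val l) k) => //= E.
  by case/eqP: Hl; apply: val_inj.
case: (eqVneq kk i) => [Ei|Ni]; last by rewrite label_upd //; apply/eqP; rewrite eq_sym.
rewrite -IH; congr (L i); apply: functional_extensionality => l; rewrite /upd /w.
by case: (eqVneq l kk) => [->|] //; rewrite /= ltnn /v /upd Ei eqxx.
Qed.
End Labellings.

Section IsothermicNets.
Variables m N : nat.
Implicit Types f : ('I_m -> Z) -> Vec N.

Definition quad_cross_ratio f u (i j : 'I_m) : C :=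
  cross_ratio (f u) (f (lshift_e u i)) (f (lshift_e (lshift_e u i) j)) (f (lshift_e u j)).

(* Forward: the edge products <fs_i - fs, f_i - f> of a Christoffel dual fs
   form an edge labelling factorising the cross-ratios. *)
Lemma koenigs_cross_ratio_labelling f : circular_net f -> koenigs f ->
  exists alpha : 'I_m -> Z -> R, forall u i j, i <> j ->
    quad_cross_ratio f u i j = (alpha i (u i) / alpha j (u j), 0).
Proof.
case=> Hq Hc [fs [Hqs Hdual]].
set L := fun i u => dot (vsub (fs (lshift_e u i)) (fs u)) (vsub (f (lshift_e u i)) (f u)).
have HQ u i j : i <> j -> [/\ L i u = L i (lshift_e u j), L j (lshift_e u i) = L j u &
    quad_cross_ratio f u i j = (L i u / L j u, 0)].
  move=> Hij.
  have [R1 R2 R3] := cross_ratio_of_dual_quad (Hq u i j Hij) (Hc u i j Hij)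
                                              (Hqs u i j Hij) (Hdual u i j Hij).
  by split => //; rewrite /L R1 lshift_comm.
have L_inv u i j : i <> j -> L i (lshift_e u j) = L i u.
  by move=> Hij; case: (HQ u i j Hij).
exists (fun i t => L i (upd (fun _ => 0%Z) i t)) => u i j Hij.
by case: (HQ u i j Hij) => _ _ ->; rewrite -!(label_own_coordinate L_inv).
Qed.

(* Backward: the dual edges alpha_i (f_i - f) / |f_i - f|^2 form a closed
   1-form whose integral is a Christoffel dual net. *)
Lemma cross_ratio_labelling_koenigs f (alpha : 'I_m -> Z -> R) : Qnet f ->
  (forall u i j, i <> j -> quad_cross_ratio f u i j = (alpha i (u i) / alpha j (u j), 0)) ->
  koenigs f.
Proof.
move=> Hq Halpha.
set om := fun i u => dual_edge_vec (f u) (f (lshift_e u i)) (alpha i (u i)).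
have Hdual u i j : i <> j ->
    vadd (om i u) (om j (lshift_e u i)) = vadd (om j u) (om i (lshift_e u j)) /\
    forall A' B' X' D', B' = vadd A' (om i u) -> X' = vadd B' (om j (lshift_e u i)) ->
      D' = vadd A' (om j u) ->
      good_quad A' B' X' D' /\
      dual_quads (f u) (f (lshift_e u i)) (f (lshift_e (lshift_e u i) j)) (f (lshift_e u j))
                 A' B' X' D'.
  move=> Hij; have [H1 H2] := dual_quad_of_cross_ratio (Hq u i j Hij) (Halpha u i j Hij).
  by rewrite /om lshift_other // (lshift_other u (nesym Hij)) (lshift_comm u j i).
have [F HF] := closed_form_exact (fun u i j Hij => proj1 (Hdual u i j Hij)).
exists F; split => u i j Hij; have [_ H2] := Hdual u i j Hij.
- by case: (H2 (F u) (F (lshift_e u i)) (F (lshift_e (lshift_e u i) j)) (F (lshift_e u j))).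
- by case: (H2 (F u) (F (lshift_e u i)) (F (lshift_e (lshift_e u i) j)) (F (lshift_e u j))).
Qed.
End IsothermicNets.

Unset Implicit Arguments.
Theorem mainTheorem14 (m N : nat) (f : ('I_m -> Z) -> Vec N)
  (Hf : circular_net f) :
  isothermic f <->
  exists alpha : 'I_m -> Z -> R,
    forall (u : 'I_m -> Z) (i j : 'I_m), i <> j ->
      cross_ratio (f u) (f (lshift_e u i)) (f (lshift_e (lshift_e u i) j)) (f (lshift_e u j))
      = (alpha i (u i) / alpha j (u j), 0).
Proof.
split.
- by case=> _; exact: koenigs_cross_ratio_labelling.
- case=> alpha Halpha; split => //.
  exact: (cross_ratio_labelling_koenigs (proj1 Hf) Halpha).
Qed.
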